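(* Let $n$ be a nonnegative integer and let $x$ be a complex number such that no denominator below vanishes. Then \[ \sum_{k=0}^{2n}(-1)^k\binom{2n}{k}\frac{\binom{x+k}{k}^2}{\binom{x+2n}{k}^2}H_{k}^{\langle2\rangle}(x) =\frac{1}{2}\frac{\binom{x+n}{n}^2\binom{1+2x+2n}{2n}}{\binom{x+2n}{2n}^2\binom{1+2x+n}{n}}H_{n}^{\langle2\rangle}(x). \]
   Context: For complex $z$ and a nonnegative integer $k$, $\binom{z}{k}=\frac{z(z-1)\cdots(z-k+1)}{k!}$ (with $\binom{z}{0}=1$). For complex $x$ and nonnegative integer $m$, $H_0^{\langle 2\rangle}(x)=0$ and $H_m^{\langle 2\rangle}(x)=\sum_{j=1}^m\frac{1}{(x+j)^2}$ for $m\ge1$. The parameter $x$ is assumed to be such that all denominators are nonzero. *)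

From HB Require Import structures.
From mathcomp Require Import all_boot all_order all_algebra.
From mathcomp Require Import complex.
From mathcomp Require Import Rstruct.
From Stdlib Require Rdefinitions.
Set Implicit Arguments. Unset Strict Implicit. Unset Printing Implicit Defensive.
Import Order.TTheory GRing.Theory Num.Theory.
Local Open Scope ring_scope.

Notation Cplx := (complex Rdefinitions.R).

Definition binom (z : Cplx) (k : nat) : Cplx :=
  (\prod_(i < k) (z - i%:R)) / (k`!)%:R.

Definition H2 (x : Cplx) (m : nat) : Cplx :=
  \sum_(1 <= j < m.+1) 1 / (x + j%:R) ^+ 2.

From mathcomp Require Import all_boot all_order all_algebra.
From mathcomp Require Import complex Rstruct.
From mathcomp Require Import ring zify.
Import Order.TTheory GRing.Theory Num.Theory.
Local Open Scope ring_scope.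

(* Put Q_m(t) = prod_(i=1..m) ((x+i)^2 - t).  A Dixon-type identity
     sum_k (-1)^k C(2n,k) Q_k(t) Q_(2n-k)(t) = c_n Q_n(t)
   holds identically in t; it is proved by induction on n, the recurrence in n
   coming from a creative-telescoping certificate in k.  Since
   Q_m'(0) = - Q_m(0) H_m(x), differentiating at t = 0 gives
     sum_k (-1)^k C(2n,k) Q_k(0) Q_(2n-k)(0) (H_k + H_(2n-k)) = c_n Q_n(0) H_n,
   and the reflection k <-> 2n-k shows that both halves of the left-hand side
   are equal.  Here c_n = (2n)! (2x+2)_(2n) / (n! (2x+2)_n) with (a)_m the
   rising factorial; finally Q_m(0) = ((x+1)_m)^2 and every generalized
   binomial of the statement is a rising factorial divided by a factorial. *)

Section Rising.
Context {R : pzSemiRingType}.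

Definition rising (a : R) (m : nat) : R := \prod_(i < m) (a + i%:R).

Lemma risingS a m : rising a m.+1 = rising a m * (a + m%:R).
Proof. by rewrite /rising big_ord_recr. Qed.

Lemma rising_add a m k : rising a (m + k) = rising a m * rising (a + m%:R) k.
Proof.
rewrite /rising big_split_ord; congr (_ * _).
by apply: eq_bigr => i _; rewrite natrD addrA.
Qed.

End Rising.

Lemma natr_fact_neq0 (R : numDomainType) (n : nat) : n`!%:R != 0 :> R.
Proof. by rewrite pnatr_eq0 -lt0n fact_gt0. Qed.

Lemma natr_binE (R : numFieldType) (N k : nat) : (k <= N)%N ->
  'C(N, k)%:R = N`!%:R / (k`!%:R * (N - k)`!%:R) :> R.
Proof.
move=> le_kN; rewrite -(bin_fact le_kN) !natrM mulfK //.
by rewrite mulf_neq0 ?natr_fact_neq0.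
Qed.

Lemma horner_injective (R : numDomainType) (p q : {poly R}) :
  (forall t, p.[t] = q.[t]) -> p = q.
Proof.
move=> pq; apply/eqP; rewrite -subr_eq0; apply/eqP.
apply: (@roots_geq_poly_eq0 _ _ [seq i%:R | i <- iota 0 (size (p - q))]).
- by apply/allP => _ /mapP [i _ ->]; rewrite /root !hornerE pq subrr.
- by rewrite map_inj_uniq ?iota_uniq // => i j /eqP; rewrite eqr_nat => /eqP.
- by rewrite size_map size_iota.
Qed.

Lemma sum_sign_bin_reflect {R : pzRingType} (n : nat) (F : nat -> nat -> R) :
  \sum_(0 <= k < (2 * n).+1) (-1) ^+ k * 'C(2 * n, k)%:R * F k (2 * n - k)%N
  = \sum_(0 <= k < (2 * n).+1) (-1) ^+ k * 'C(2 * n, k)%:R * F (2 * n - k)%N k.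
Proof.
rewrite big_nat_rev; apply: eq_big_nat => k /andP [_ lt_k2n].
have le_k2n : (k <= 2 * n)%N by rewrite -ltnS.
rewrite add0n subSS subKn // bin_sub //.
by rewrite -signr_odd oddB // oddM andFb addFb signr_odd.
Qed.

Section Dixon.
Context {R : numFieldType} (x : R).

Definition sqprod (t : R) (m : nat) : R := \prod_(i < m) ((x + (i.+1)%:R) ^+ 2 - t).

Lemma sqprodS t m : sqprod t m.+1 = sqprod t m * ((x + (m.+1)%:R) ^+ 2 - t).
Proof. by rewrite /sqprod big_ord_recr. Qed.

Definition dixon_term (t : R) (n k : nat) : R :=
  (-1) ^+ k * 'C(2 * n, k)%:R * (sqprod t k * sqprod t (2 * n - k)).

Definition dixon_sum (t : R) (n : nat) : R :=
  \sum_(0 <= k < (2 * n).+1) dixon_term t n k.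

Definition dixon_rec_coef (t : R) (n : nat) : R :=
  2 * (2 * n%:R + 1) * ((x + n%:R + 1) ^+ 2 - t)
    * (2 * x + 2 * n%:R + 2) * (2 * x + 2 * n%:R + 3).

(* Certificate, in the sense of creative telescoping, of the recurrence
   [dixon_sum_rec]. *)
Definition dixon_cert (t : R) (n k : nat) : R :=
  let N := n%:R in let K := k%:R in let p := x ^+ 2 - t in
  (-1) ^+ k * 'C((2 * n).+2, k)%:R * K * (sqprod t k * sqprod t ((2 * n).+1 - k))
  * ((N + 1) * K ^+ 2 - (N + 1) * (7 + 4 * x + 6 * N) * K + 10 + 8 * x
     - 2 * p - 2 * x * p + 28 * N + 16 * N * x - N * p + 26 * N ^+ 2
     + 8 * N ^+ 2 * x + 8 * N ^+ 3).

Lemma dixon_term_telescoping t n k : (k <= 2 * n)%N ->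
  2 * (n%:R + 1) * ((2 * x + 2 + n%:R) * dixon_term t n.+1 k
                    - dixon_rec_coef t n * dixon_term t n k)
  = dixon_cert t n k.+1 - dixon_cert t n k.
Proof.
move=> le_k2n; set m := (2 * n - k)%N.
have def2n : (2 * n = k + m)%N by rewrite subnKC.
have defn : n%:R = (k%:R + m%:R) / 2 :> R.
  by rewrite -natrD -def2n natrM mulrAC divff ?mul1r // pnatr_eq0.
rewrite /dixon_term /dixon_cert /dixon_rec_coef !natr_binE; try lia.
have -> : (2 * n.+1 = (k + m).+2)%N by lia.
rewrite def2n.
have -> : ((k + m).+2 - k = m.+2)%N by lia.
have -> : ((k + m).+2 - k.+1 = m.+1)%N by lia.
have -> : ((k + m).+1 - k = m.+1)%N by lia.
have -> : ((k + m).+1 - k.+1 = m)%N by lia.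
rewrite addKn !sqprodS defn !factS !natrM [(-1) ^+ k.+1]exprS.
field.
by rewrite !natr_fact_neq0 !(addrC 1) !natr1 -natrD !pnatr_eq0.
Qed.

Lemma dixon_cert_top t n :
  dixon_cert t n (2 * n).+1 = - (2 * (n%:R + 1) * ((2 * x + 2 + n%:R)
     * (dixon_term t n.+1 (2 * n).+1 + dixon_term t n.+1 (2 * n).+2))).
Proof.
rewrite /dixon_cert /dixon_term (_ : 2 * n.+1 = (2 * n).+2)%N; last by lia.
rewrite !subnn subSnn binSn binn !sqprodS /sqprod big_ord0.
rewrite !exprS exprM sqrrN !expr1n; ring.
Qed.

Lemma dixon_sum_rec t n :
  (2 * x + 2 + n%:R) * dixon_sum t n.+1 = dixon_rec_coef t n * dixon_sum t n.
Proof.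
apply: (mulfI (_ : 2 * (n%:R + 1) != 0)).
  by rewrite mulf_neq0 ?natr1 ?pnatr_eq0.
set A := 2 * x + 2 + n%:R; set B := dixon_rec_coef t n.
rewrite /dixon_sum (_ : (2 * n.+1).+1 = (2 * n).+3)%N; last by lia.
rewrite (big_nat_recr (2 * n).+2) // (big_nat_recr (2 * n).+1) //=.
set S1 := \sum_(0 <= k < (2 * n).+1) dixon_term t n.+1 k.
set S0 := \sum_(0 <= k < (2 * n).+1) dixon_term t n k.
have telescoped : 2 * (n%:R + 1) * (A * S1 - B * S0)
    = dixon_cert t n (2 * n).+1 - dixon_cert t n 0.
  rewrite /S1 /S0 !mulr_sumr -sumrB mulr_sumr.
  apply: telescope_sumr_eq => // k /andP [_ lt_k].
  exact: dixon_term_telescoping.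
rewrite {2}/dixon_cert mulr0 !mul0r subr0 dixon_cert_top in telescoped.
transitivity (2 * (n%:R + 1) * (A * S1 - B * S0)
  + 2 * (n%:R + 1) * (A * (dixon_term t n.+1 (2 * n).+1 + dixon_term t n.+1 (2 * n).+2))
  + 2 * (n%:R + 1) * (B * S0)); first by ring.
by rewrite telescoped addNr add0r.
Qed.

Lemma dixon_sum_closed t n :
  rising (2 * x + 2) n * n`!%:R * dixon_sum t n
  = (2 * n)`!%:R * rising (2 * x + 2) (2 * n) * sqprod t n.
Proof.
elim: n => [|n IH].
  by rewrite /dixon_sum big_nat1 /dixon_term /rising /sqprod !big_ord0 muln0 bin0; ring.
transitivity (n.+1%:R * n`!%:R * rising (2 * x + 2) n
              * ((2 * x + 2 + n%:R) * dixon_sum t n.+1)).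
  by rewrite risingS factS natrM; ring.
rewrite dixon_sum_rec.
transitivity (n.+1%:R * dixon_rec_coef t n * (rising (2 * x + 2) n * n`!%:R * dixon_sum t n)).
  by ring.
rewrite IH /dixon_rec_coef (_ : 2 * n.+1 = (2 * n).+2)%N; last by lia.
by rewrite !risingS !factS !natrM sqprodS; ring.
Qed.

Lemma sqprod_at0 m : sqprod 0 m = rising (x + 1) m ^+ 2.
Proof.
rewrite /sqprod /rising -prodrXl; apply: eq_bigr => i _.
by rewrite subr0 -natr1 [_%:R + 1]addrC addrA.
Qed.

Definition sqprod_poly (m : nat) : {poly R} :=
  \prod_(i < m) (((x + (i.+1)%:R) ^+ 2)%:P - 'X).

Lemma sqprod_polyS m :
  sqprod_poly m.+1 = sqprod_poly m * (((x + (m.+1)%:R) ^+ 2)%:P - 'X).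
Proof. by rewrite /sqprod_poly big_ord_recr. Qed.

Lemma horner_sqprod_poly m t : (sqprod_poly m).[t] = sqprod t m.
Proof.
by rewrite horner_prod; apply: eq_bigr => i _; rewrite !hornerE.
Qed.

Lemma dixon_poly n :
  (rising (2 * x + 2) n * n`!%:R)%:P
    * \sum_(0 <= k < (2 * n).+1)
        ((-1) ^+ k * 'C(2 * n, k)%:R)%:P * (sqprod_poly k * sqprod_poly (2 * n - k))
  = ((2 * n)`!%:R * rising (2 * x + 2) (2 * n))%:P * sqprod_poly n.
Proof.
apply: horner_injective => t.
rewrite !hornerM !hornerC horner_sum horner_sqprod_poly -dixon_sum_closed.
congr (_ * _); apply: eq_bigr => k _.
by rewrite hornerM hornerC hornerM !horner_sqprod_poly /dixon_term.
Qed.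

End Dixon.

Section Harmonic.
Variable x : Cplx.

Lemma H2S m : H2 x m.+1 = H2 x m + 1 / (x + (m.+1)%:R) ^+ 2.
Proof. by rewrite /H2 big_nat_recr. Qed.

Lemma deriv_sqprod_poly0 m : (forall j, (1 <= j <= m)%N -> x + j%:R != 0) ->
  (sqprod_poly x m)^`().[0] = - sqprod x 0 m * H2 x m.
Proof.
elim: m => [|m IH] hx.
  by rewrite /sqprod_poly big_ord0 derivC horner0 /H2 big_geq // mulr0.
have hxm : x + (m.+1)%:R != 0 by rewrite hx ?leqnn.
rewrite sqprod_polyS derivM derivB derivC derivX !hornerE IH; last first.
  by move=> j /andP [j_gt0 j_le]; rewrite hx // j_gt0 ltnW.
rewrite horner_sqprod_poly sqprodS H2S.
field.
by rewrite [1 + _]addrC natr1.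
Qed.

Lemma dixon_sum_H2 n : (forall j, (1 <= j <= 2 * n)%N -> x + j%:R != 0) ->
  rising (2 * x + 2) n * n`!%:R
    * \sum_(0 <= k < (2 * n).+1) (-1) ^+ k * 'C(2 * n, k)%:R
        * (sqprod x 0 k * sqprod x 0 (2 * n - k) * (H2 x k + H2 x (2 * n - k)))
  = (2 * n)`!%:R * rising (2 * x + 2) (2 * n) * sqprod x 0 n * H2 x n.
Proof.
move=> hx.
have hx_le m : (m <= 2 * n)%N -> forall j, (1 <= j <= m)%N -> x + j%:R != 0.
  by move=> le_m j /andP [j_gt0 le_jm]; rewrite hx // j_gt0 (leq_trans le_jm).
have deriv_term k : (0 <= k < (2 * n).+1)%N ->
  ((((-1) ^+ k * 'C(2 * n, k)%:R)%:P * (sqprod_poly x k * sqprod_poly x (2 * n - k)))^`()).[0]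
  = - ((-1) ^+ k * 'C(2 * n, k)%:R
       * (sqprod x 0 k * sqprod x 0 (2 * n - k) * (H2 x k + H2 x (2 * n - k)))).
  move=> /andP [_ lt_k]; rewrite deriv_mulC derivM hornerM hornerC hornerD !hornerM.
  rewrite !deriv_sqprod_poly0 ?horner_sqprod_poly; first by ring.
  - exact: hx_le (leq_subr _ _).
  - exact: hx_le lt_k.
have := congr1 (fun p => p^`().[0]) (dixon_poly x n).
rewrite /= !deriv_mulC !hornerM !hornerC raddf_sum horner_sum.
rewrite (eq_big_nat _ _ deriv_term) sumrN deriv_sqprod_poly0; last first.
  exact: hx_le (leq_pmull _ _).
by move=> h; apply: oppr_inj; rewrite -[LHS]mulrN h; ring.
Qed.

Lemma dixon_sum_H2_half n : (forall j, (1 <= j <= 2 * n)%N -> x + j%:R != 0) ->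
  2 * (rising (2 * x + 2) n * n`!%:R)
    * \sum_(0 <= k < (2 * n).+1)
        (-1) ^+ k * 'C(2 * n, k)%:R * (sqprod x 0 k * sqprod x 0 (2 * n - k)) * H2 x k
  = (2 * n)`!%:R * rising (2 * x + 2) (2 * n) * sqprod x 0 n * H2 x n.
Proof.
move=> hx; rewrite -dixon_sum_H2 //.
set S := \sum_(0 <= k < _) _.
have split_H2 : \sum_(0 <= k < (2 * n).+1) (-1) ^+ k * 'C(2 * n, k)%:R
      * (sqprod x 0 k * sqprod x 0 (2 * n - k) * (H2 x k + H2 x (2 * n - k)))
    = S + \sum_(0 <= k < (2 * n).+1) (-1) ^+ k * 'C(2 * n, k)%:R
      * (sqprod x 0 k * sqprod x 0 (2 * n - k) * H2 x (2 * n - k)).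
  by rewrite -big_split; apply: eq_bigr => k _ /=; ring.
rewrite split_H2 (sum_sign_bin_reflect n (fun k l => sqprod x 0 k * sqprod x 0 l * H2 x l)).
have -> : \sum_(0 <= k < (2 * n).+1) (-1) ^+ k * 'C(2 * n, k)%:R
      * (sqprod x 0 (2 * n - k) * sqprod x 0 k * H2 x k) = S.
  by apply: eq_bigr => k _; ring.
ring.
Qed.

End Harmonic.

Lemma binom_addn (y : Cplx) (k : nat) : binom (y + k%:R) k = rising (y + 1) k / k`!%:R.
Proof.
rewrite /binom /rising (reindex_inj rev_ord_inj); congr (_ / _).
apply: eq_bigr => i _ /=; rewrite natrB ?ltn_ord //; ring.
Qed.

Lemma binom_sq_ratio (x : Cplx) (N k : nat) : (k <= N)%N -> rising (x + 1) N != 0 ->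
  binom (x + k%:R) k ^+ 2 / binom (x + N%:R) k ^+ 2
  = sqprod x 0 k * sqprod x 0 (N - k) / sqprod x 0 N.
Proof.
move=> le_kN hX.
have splitN : rising (x + 1) N = rising (x + 1) (N - k) * rising (x + (N - k)%:R + 1) k.
  by rewrite -(subnK le_kN) rising_add subnK // addrAC.
have -> : x + N%:R = x + (N - k)%:R + k%:R by rewrite -addrA -natrD subnK.
move: hX; rewrite !binom_addn !sqprod_at0 splitN mulf_eq0 negb_or => /andP [hX1 hX2].
field.
by rewrite hX1 hX2 natr_fact_neq0.
Qed.

Theorem theorem2 (n : nat) (x : Cplx)
  (hx : forall j : nat, (1 <= j <= 2 * n)%N -> x + j%:R != 0)
  (hb : forall k : nat, (k <= 2 * n)%N -> binom (x + (2 * n)%:R) k != 0)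
  (hb2 : binom (1 + 2 * x + n%:R) n != 0) :
  \sum_(0 <= k < (2 * n).+1)
     (-1) ^+ k * ('C(2 * n, k))%:R
       * ((binom (x + k%:R) k) ^+ 2 / (binom (x + (2 * n)%:R) k) ^+ 2)
       * H2 x k
  = 1 / 2 * ((binom (x + n%:R) n) ^+ 2 * binom (1 + 2 * x + (2 * n)%:R) (2 * n)
             / ((binom (x + (2 * n)%:R) (2 * n)) ^+ 2 * binom (1 + 2 * x + n%:R) n))
    * H2 x n.
Proof.
have hX : rising (x + 1) (2 * n) != 0.
  by apply/prodf_neq0 => i _; rewrite addrAC -addrA natr1; apply: hx; exact: ltn_ord.
have hR : rising (2 * x + 2) n != 0.
  move: hb2; rewrite binom_addn mulf_eq0 negb_or => /andP [+ _].
  by have -> : 1 + 2 * x + 1 = 2 * x + 2 by ring.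
set S := \sum_(0 <= k < (2 * n).+1)
  (-1) ^+ k * 'C(2 * n, k)%:R * (sqprod x 0 k * sqprod x 0 (2 * n - k)) * H2 x k.
transitivity (S / sqprod x 0 (2 * n)).
  rewrite mulr_suml; apply: eq_big_nat => k /andP [_ lt_k].
  by rewrite binom_sq_ratio //; ring.
have h2R : 2 * (rising (2 * x + 2) n * n`!%:R) != 0.
  by rewrite !mulf_neq0 ?natr_fact_neq0 ?pnatr_eq0.
rewrite -[S](mulKf h2R) dixon_sum_H2_half // !binom_addn !sqprod_at0.
rewrite (_ : 1 + 2 * x + 1 = 2 * x + 2); last by ring.
field.
by rewrite hX hR !natr_fact_neq0 ?pnatr_eq0.
Qed.
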